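(* Let $\mathcal{S}\subseteq\mathcal{P}_{fin}(\mathbb{N})$ be an IP set, $r\geq1$, and $c:\mathcal{S}\rightarrow[1,r]$ a coloring. Then at least one of the following holds: (1) there is an IP set $\mathcal{S}'\subseteq\mathcal{S}$ such that $c$ is constant on $\mathcal{S}'$; or (2) there are a finite collection $\mathcal{B}\subseteq\mathcal{S}$ and an IP set $\mathcal{T}\subseteq\mathcal{S}-\mathcal{B}$ such that $\mathcal{B}$ full-matches $\mathcal{T}$.
   Context: $\mathcal{P}_{fin}(\mathbb{N})$ is the set of finite subsets of $\mathbb{N}$. A set $\mathcal{S}\subseteq\mathcal{P}_{fin}(\mathbb{N})$ is an IP set if it is closed under finite unions and contains an infinite family of pairwise disjoint elements. For $B\in\mathcal{S}$, $\mathcal{S}-B:=\{T\in\mathcal{S}: T\cap B=\emptyset\}$, and for $\mathcal{B}\subseteq\mathcal{S}$, $\mathcal{S}-\mathcal{B}:=\bigcap_{B\in\mathcal{B}}(\mathcal{S}-B)$. Relative to a coloring $c$: a family $\mathcal{D}$ full-matches a set $B$ if there is $D\in\mathcal{D}$ with $c(D)=c(B)=c(D\cup B)$; $\mathcal{D}$ full-matches a family $\mathcal{B}$ if it full-matches every $B\in\mathcal{B}$. *)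

From mathcomp Require Import all_boot.
From Stdlib Require List.
Set Implicit Arguments. Unset Strict Implicit. Unset Printing Implicit Defensive.

Definition natset := nat -> bool.

Definition finite_natset (A : natset) : Prop := exists n, forall m, A m -> m < n.

Definition natfam := natset -> Prop.

Definition nsetU (A B : natset) : natset := fun n => A n || B n.
Definition ndisjoint (A B : natset) : Prop := forall n, ~~ (A n && B n).
Definition ndiff (A B : natset) : Prop := exists n, A n <> B n.

(* S is an IP set: S ⊆ P_fin(N), closed under (binary, hence finite) unions,
   and contains an infinite family of pairwise disjoint elements (given as an
   injective sequence of pairwise disjoint members). *)
Definition IPset (S : natfam) : Prop :=
  (forall A, S A -> finite_natset A) /\
  (forall A B, S A -> S B -> S (nsetU A B)) /\
  exists D : nat -> natset,
    (forall i, S (D i)) /\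
    (forall i j, i <> j -> ndiff (D i) (D j)) /\
    (forall i j, i <> j -> ndisjoint (D i) (D j)).

(* S - Bs : elements of S disjoint from every member of the collection Bs *)
Definition fam_minus (S : natfam) (Bs : list natset) : natfam :=
  fun T => S T /\ forall B, List.In B Bs -> ndisjoint T B.

Definition full_matches_set (c : natset -> nat) (Ds : list natset) (B : natset) : Prop :=
  exists D, List.In D Ds /\ c D = c B /\ c B = c (nsetU D B).

Definition full_matches (c : natset -> nat) (Ds : list natset) (T : natfam) : Prop :=
  forall B, T B -> full_matches_set c Ds B.

(* Lemma 2.4 holds because its first alternative always does: this is
   Hindman's finite unions theorem, proved here by Baumgartner's argument.

   A block sequence is a sequence of nonempty finite sets, each lying entirely
   to the left of the next; a condensation of a block sequence D is a block
   sequence of finite unions of D.  A family Z is large for D when every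
   condensation of D has a finite union in Z. *)

From mathcomp Require Import all_boot.
From Stdlib Require List.
From Stdlib Require Import Classical ClassicalEpsilon FunctionalExtensionality.
Set Implicit Arguments. Unset Strict Implicit. Unset Printing Implicit Defensive.

Definition nset0 : natset := fun _ => false.

Lemma nset_ext (A B : natset) : (forall u, A u = B u) -> A = B.
Proof. exact: functional_extensionality. Qed.

Lemma nsetUC A B : nsetU A B = nsetU B A.
Proof. by apply: nset_ext => u; rewrite /nsetU orbC. Qed.

Lemma nsetUA A B C : nsetU A (nsetU B C) = nsetU (nsetU A B) C.
Proof. by apply: nset_ext => u; rewrite /nsetU orbA. Qed.

Lemma nset0U A : nsetU nset0 A = A.
Proof. by apply: nset_ext. Qed.

Lemma nsetUUr A B C : nsetU (nsetU A C) (nsetU B C) = nsetU (nsetU A B) C.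
Proof. by apply: nset_ext => u; rewrite /nsetU orbACA orbb. Qed.

Definition nonempty (X : natset) := exists u, X u.
Definition below (X : natset) (m : nat) := forall u, X u -> u < m.
Definition above (X : natset) (m : nat) := forall u, X u -> m <= u.
Definition precedes (X Y : natset) := forall u v, X u -> Y v -> u < v.

Lemma precedes_bound X Y m : below X m -> above Y m -> precedes X Y.
Proof. by move=> hX hY u v /hX hu /hY; exact: leq_trans. Qed.

Lemma precedesU X1 X2 Y1 Y2 :
  precedes X1 Y1 -> precedes X1 Y2 -> precedes X2 Y1 -> precedes X2 Y2 ->
  precedes (nsetU X1 X2) (nsetU Y1 Y2).
Proof.
move=> h11 h12 h21 h22 u v; rewrite /nsetU => /orP [] hu /orP [] hv.
- exact: h11 hu hv.
- exact: h12 hu hv.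
- exact: h21 hu hv.
- exact: h22 hu hv.
Qed.

Definition blockseq (E : nat -> natset) :=
  [/\ forall i, nonempty (E i), forall i, exists m, below (E i) m
    & forall i j, i < j -> precedes (E i) (E j)].

Lemma blockseq_shift E n : blockseq E -> blockseq (fun i => E (n + i)).
Proof. by case=> hne hbd hord; split=> // i j hij; apply: hord; rewrite ltn_add2l. Qed.

Lemma blockseq_index E k u : blockseq E -> E k u -> k <= u.
Proof.
case=> hne _ hord; elim: k u => [//|k IH] v hv.
have [u hu] := hne k.
exact: leq_ltn_trans (IH _ hu) (hord _ _ (ltnSn k) _ _ hu hv).
Qed.

Inductive unions (E : nat -> natset) (P : pred nat) : natset -> Prop :=
  | unions1 i : P i -> unions E P (E i)
  | unionsU X Y : unions E P X -> unions E P Y -> unions E P (nsetU X Y).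

Notation fu E := (unions E (fun _ => true)).

Lemma fu1 E i : fu E (E i).
Proof. exact: unions1. Qed.

Lemma unions_sub E (P Q : pred nat) X :
  (forall i, P i -> Q i) -> unions E P X -> unions E Q X.
Proof. by move=> hPQ; elim=> [i /hPQ|? ? _ h1 _ h2]; [exact: unions1 | exact: unionsU]. Qed.

Lemma unions_trans E D (P Q : pred nat) X :
  (forall i, P i -> unions D Q (E i)) -> unions E P X -> unions D Q X.
Proof. by move=> hE; elim=> [i /hE //|? ? _ h1 _ h2]; exact: unionsU. Qed.

Lemma unions_mem E (P : pred nat) X u : unions E P X -> X u -> exists2 i, P i & E i u.
Proof.
elim=> [i hi hu|X1 X2 _ IH1 _ IH2]; first by exists i.
by rewrite /nsetU => /orP [/IH1|/IH2].
Qed.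

Lemma unions_nonempty E (P : pred nat) X : (forall i, nonempty (E i)) -> unions E P X -> nonempty X.
Proof.
move=> hE; elim=> [i _|X1 X2 _ [u hu] _ _]; first exact: hE.
by exists u; rewrite /nsetU hu.
Qed.

Lemma unions_below E (P : pred nat) X :
  (forall i, exists m, below (E i) m) -> unions E P X -> exists m, below X m.
Proof.
move=> hE; elim=> [i _|X1 X2 _ [m1 h1] _ [m2 h2]]; first exact: hE.
exists (maxn m1 m2) => u; rewrite /nsetU => /orP [/h1|/h2] h.
  by rewrite leq_max h.
by rewrite leq_max h orbT.
Qed.

Lemma precedes_unions_r A E (P : pred nat) Y :
  (forall i, P i -> precedes A (E i)) -> unions E P Y -> precedes A Y.
Proof. by move=> hA hY u v hu /(unions_mem hY) [i hi hv]; exact: hA hi _ _ hu hv. Qed.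

Lemma precedes_unions E (P Q : pred nat) X Y :
  (forall i j, P i -> Q j -> precedes (E i) (E j)) ->
  unions E P X -> unions E Q Y -> precedes X Y.
Proof.
move=> hPQ hX hY u v /(unions_mem hX) [i hi hu].
by apply: precedes_unions_r hY _ _ hu => j hj; exact: hPQ.
Qed.

Lemma unions_shift E n X : fu (fun i => E (n + i)) X ->
  exists b, unions E (fun i => n <= i < b) X.
Proof.
elim=> [i _|X1 X2 _ [a h1] _ [b h2]].
  by exists (n + i).+1; apply: (@unions1 E _ (n + i)); rewrite leq_addr leqnn.
exists (maxn a b); apply: unionsU.
  by apply: unions_sub h1 => i /andP [-> h]; rewrite leq_max h.
by apply: unions_sub h2 => i /andP [-> h]; rewrite leq_max h orbT.
Qed.

Definition prefix_unions (E : nat -> natset) (k : nat) (z : natset) :=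
  z = nset0 \/ unions E (fun i => i < k) z.

Lemma prefix_unionsU E k z1 z2 :
  prefix_unions E k z1 -> prefix_unions E k z2 -> prefix_unions E k (nsetU z1 z2).
Proof.
case=> [->|h1]; first by rewrite nset0U.
case=> [->|h2]; first by rewrite nsetUC nset0U; right.
by right; exact: unionsU.
Qed.

Lemma prefix_unions_extend E k k' z :
  prefix_unions E k z -> k < k' -> unions E (fun i => i < k') (nsetU z (E k)).
Proof.
move=> hz hk; have hEk : unions E (fun i => i < k') (E k) by exact: unions1.
case: hz => [->|hz]; first by rewrite nset0U.
by apply: unionsU hEk; apply: unions_sub hz => i hi; exact: ltn_trans hi hk.
Qed.

Lemma unions_last_block E (P : pred nat) X : unions E P X ->
  exists k z, [/\ P k, prefix_unions E k z & X = nsetU z (E k)].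
Proof.
elim=> [k hk|X1 X2 _ [k1 [z1 [hk1 hz1 ->]]] _ [k2 [z2 [hk2 hz2 ->]]]].
  by exists k, nset0; split; [| left | rewrite nset0U].
wlog hle : k1 k2 z1 z2 hk1 hk2 hz1 hz2 / k1 <= k2.
  move=> hw; case: (leqP k1 k2) => hk; first exact: hw.
  by rewrite nsetUC; apply: hw => //; exact: ltnW.
move: hle; rewrite leq_eqVlt => /orP [/eqP ek|hlt].
  subst k2; by exists k1, (nsetU z1 z2); split; [| exact: prefix_unionsU | exact: nsetUUr].
exists k2, (nsetU (nsetU z1 (E k1)) z2); split=> //; last by rewrite nsetUA.
by apply: prefix_unionsU hz2; right; exact: prefix_unions_extend.
Qed.

Definition cond (E D : nat -> natset) := blockseq E /\ forall i, fu D (E i).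

Lemma cond_fu E D X : cond E D -> fu E X -> fu D X.
Proof. by case=> _ hE; apply: unions_trans => i _; exact: hE. Qed.

Lemma cond_refl D : blockseq D -> cond D D.
Proof. by move=> hD; split=> // i; exact: fu1. Qed.

Lemma cond_trans E D' D : cond E D' -> cond D' D -> cond E D.
Proof. by move=> [hE h1] h2; split=> // i; exact: cond_fu h2 (h1 i). Qed.

Lemma tail_cond D m : blockseq D -> cond (fun i => D (m + i)) D.
Proof. by move=> hD; split=> [|i]; [exact: blockseq_shift | exact: fu1]. Qed.

Lemma tail_above D m X : blockseq D -> fu (fun i => D (m + i)) X -> above X m.
Proof.
move=> hD hX u /(unions_mem hX) [i _ hu].
exact: leq_trans (leq_addr i m) (blockseq_index hD hu).
Qed.

Lemma cond_chain (Ds : nat -> nat -> natset) :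
  (forall n, blockseq (Ds n)) -> (forall n, cond (Ds n.+1) (Ds n)) ->
  forall n k, n <= k -> cond (Ds k) (Ds n).
Proof.
move=> hb hc n k /subnKC <-; elim: (k - n) => [|d IH].
  by rewrite addn0; exact: cond_refl.
by rewrite addnS; exact: cond_trans (hc _) IH.
Qed.

Definition large (Z : natfam) (D : nat -> natset) :=
  forall E, cond E D -> exists2 X, fu E X & Z X.

Lemma large_cond Z D E : large Z D -> cond E D -> large Z E.
Proof. by move=> hZ hE F hF; apply: hZ; exact: cond_trans hF hE. Qed.

Lemma large_mono (Z Z' : natfam) D : (forall X, Z X -> Z' X) -> large Z D -> large Z' D.
Proof. by move=> hZ hl E /hl [X hX /hZ]; exists X. Qed.

Lemma large_true D : large (fun _ => True) D.
Proof. by move=> E _; exists (E 0); first exact: fu1. Qed.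

Lemma not_large Z D : ~ large Z D -> exists2 E, cond E D & forall X, fu E X -> ~ Z X.
Proof.
move=> hn; apply: NNPP => hE; apply: hn => E hc; apply: NNPP => hX.
by apply: hE; exists E => // X hfu hZ; apply: hX; exists X.
Qed.

Lemma large_partition (I : Type) (L : list I) (P : I -> natfam) (A : natfam) D :
  blockseq D -> large A D ->
  (forall X, fu D X -> A X -> exists2 i, List.In i L & P i X) ->
  exists i D', [/\ List.In i L, cond D' D & large (P i) D'].
Proof.
elim: L D => [|i L IH] D hD hA hcov.
  by have [X hX /(hcov X hX) [i []]] := hA D (cond_refl hD).
case: (classic (large (P i) D)) => hi.
  by exists i, D; split; [left | exact: cond_refl |].
have [E hE hEi] := not_large hi.
have hcovE X : fu E X -> A X -> exists2 j, List.In j L & P j X.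
  move=> hX hAX; have [j [<-|hj] hPj] := hcov X (cond_fu hE hX) hAX.
    by case: (hEi X hX hPj).
  by exists j.
have [j [D' [hj hD' hl]]] := IH E (proj1 hE) (large_cond hA hE) hcovE.
by exists j, D'; split; [right | exact: cond_trans hD' hE |].
Qed.

Lemma guarded_choice (A B : Type) (b0 : B) (G : A -> Prop) (R : A -> B -> Prop) :
  (forall a, G a -> exists b, R a b) -> exists f : A -> B, forall a, G a -> R a (f a).
Proof.
move=> hR; apply: (ClassicalEpsilon.choice (fun a b => G a -> R a b)) => a.
case: (classic (G a)) => [/hR [b hb]|hG]; first by exists b.
by exists b0 => /hG.
Qed.

Lemma staged_choice (P : nat -> natset -> nat -> Prop) :
  (forall n, exists x b, P n x b) ->
  exists (x : nat -> natset) (s : nat -> nat), forall k, P (s k) (x k) (s k.+1).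
Proof.
move=> hP.
have [f hf] : exists f : nat -> natset * nat, forall n, P n (f n).1 (f n).2.
  apply: (ClassicalEpsilon.choice (fun n p => P n p.1 p.2)) => n.
  by have [x [b hb]] := hP n; exists (x, b).
pose s k := iter k (fun n => (f n).2) 0.
by exists (fun k => (f (s k)).1), s => k; exact: hf.
Qed.

Lemma homo_step (s : nat -> nat) : (forall k, s k <= s k.+1) ->
  forall i j, i <= j -> s i <= s j.
Proof. by move=> hs; exact: (homo_leq (r := fun a b => a <= b) leqnn leq_trans hs). Qed.

Lemma separated_sequence (P : nat -> natset -> Prop) :
  (forall m, exists x, [/\ P m x, nonempty x, above x m & exists b, below x b]) ->
  exists (x : nat -> natset) (s : nat -> nat),
    [/\ forall k, P (s k) (x k), forall i k, i < k -> below (x i) (s k) & blockseq x].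
Proof.
move=> hP.
have [x [s hx]] : exists (x : nat -> natset) (s : nat -> nat), forall k,
    [/\ P (s k) (x k), nonempty (x k), above (x k) (s k) & below (x k) (s k.+1)].
  apply: (@staged_choice (fun m x b => [/\ P m x, nonempty x, above x m & below x b])).
  by move=> m; have [x [? ? ? [b ?]]] := hP m; exists x, b.
have s_mono : forall i j, i <= j -> s i <= s j.
  apply: homo_step => k; have [_ [u hu] hab hbe] := hx k.
  exact: leq_trans (hab u hu) (ltnW (hbe u hu)).
have x_below i k : i < k -> below (x i) (s k).
  move=> hik u hu; have [_ _ _ hbe] := hx i.
  exact: leq_trans (hbe u hu) (s_mono _ _ hik).
exists x, s; split=> [k|//|]; first by case: (hx k).
split=> [k|k|i j hij]; first by case: (hx k).
  by exists (s k.+1); case: (hx k).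
by have [_ _ hab _] := hx j; exact: precedes_bound (x_below _ _ hij) hab.
Qed.

Definition pairs (x : nat -> natset) (j : nat) : natset := nsetU (x j.*2) (x j.*2.+1).

Lemma pairs_blockseq x : blockseq x -> blockseq (pairs x).
Proof.
case=> hne hbd hord; split=> [j|j|i j hij].
- by have [u hu] := hne j.*2; exists u; rewrite /pairs /nsetU hu.
- by apply: (@unions_below x (fun _ => true)) => //; apply: unionsU; exact: fu1.
- by apply: precedesU; apply: hord; rewrite ?ltnS ?ltn_double ?ltn_Sdouble ?leq_double // ltnW.
Qed.

(* A finite union of pairs ends with an odd-indexed block, preceded by a finite
   union of earlier blocks; this is why pairs are used in [large_translates]. *)
Lemma pairs_last_block x X : fu (pairs x) X ->
  exists j y, unions x (fun i => i < j.*2.+1) y /\ X = nsetU y (x j.*2.+1).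
Proof.
move=> /unions_last_block [j [z [_ hz ->]]].
exists j, (nsetU z (x j.*2)); split; last by rewrite /pairs nsetUA.
have hxj : unions x (fun i => i < j.*2.+1) (x j.*2) by exact: unions1.
case: hz => [->|hz]; first by rewrite nset0U.
apply: unionsU hxj; apply: unions_trans hz => i hij.
by apply: unionsU; apply: unions1; rewrite ?ltnS ?ltn_double ?ltn_Sdouble ?leq_double // ltnW.
Qed.

(* Otherwise blocks
   avoiding all such translates could be chosen successively, and their pairs
   would form a condensation without finite unions in Z. *)
Lemma large_translates Z D : blockseq D -> large Z D ->
  exists m, forall x, fu D x -> above x m ->
    exists y, [/\ fu D y, below y m & Z (nsetU y x)].
Proof.
move=> hD hZ; apply: NNPP => hn.
pose P m x := fu D x /\ forall y, fu D y -> below y m -> ~ Z (nsetU y x).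
have avoid m : exists x, [/\ P m x, nonempty x, above x m & exists b, below x b].
  apply: NNPP => hx; apply: hn; exists m => x hfu hab; apply: NNPP => hy; apply: hx.
  have [hne hbd _] := hD.
  exists x; split; [| exact: unions_nonempty hne hfu | by [] | exact: unions_below hbd hfu].
  by split=> // y h1 h2 hyx; apply: hy; exists y.
have [x [s [hxP hxs hx]]] := separated_sequence avoid.
have hE : cond (pairs x) D.
  split=> [|j]; first exact: pairs_blockseq.
  by apply: unionsU; exact: (hxP _).1.
have [X /pairs_last_block [j [y [hy ->]]] hZX] := hZ _ hE.
apply: (hxP j.*2.+1).2 hZX.
- by apply: unions_trans hy => i _; exact: (hxP i).1.
- by move=> u /(unions_mem hy) [i hi]; exact: hxs.
Qed.

Lemma below_finite m : exists L : list natset, forall y, below y m -> List.In y L.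
Proof.
elim: m => [|m [L hL]].
  exists [:: nset0] => y hy; left; apply: nset_ext => u.
  by case: (boolP (y u)) => // /hy.
pose addm (y : natset) : natset := fun u => y u || (u == m).
exists (L ++ List.map addm L) => y hy; apply: List.in_or_app.
pose y' : natset := fun u => y u && (u != m).
have hy' : below y' m.
  move=> u /andP [/hy]; rewrite ltnS leq_eqVlt => /orP [/eqP -> |//].
  by rewrite eqxx.
case hym: (y m); [right | left].
- have -> : y = addm y'.
    apply: nset_ext => u; rewrite /addm /y'.
    by case: (eqVneq u m) => [->|_]; rewrite ?hym ?orbT ?andbT ?orbF.
  exact: List.in_map (hL _ hy').
- have -> : y = y'.
    apply: nset_ext => u; rewrite /y'.
    by case: (eqVneq u m) => [->|_]; rewrite ?hym ?andbT.
  exact: hL.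
Qed.

Lemma large_step Z D : blockseq D -> large Z D ->
  exists y D', [/\ fu D y, cond D' D, forall i, precedes y (D' i)
    & large (fun x => Z x /\ Z (nsetU y x)) D'].
Proof.
move=> hD hZ; have [m hm] := large_translates hD hZ.
have [L hL] := below_finite m.
have hT : cond (fun i => D (m + i)) D := tail_cond m hD.
pose P y x := [/\ fu D y, below y m, Z x & Z (nsetU y x)].
have hcov X : fu (fun i => D (m + i)) X -> Z X -> exists2 y, List.In y L & P y X.
  move=> hX hZX; have [y [hy hym hyX]] := hm X (cond_fu hT hX) (tail_above hD hX).
  by exists y; [exact: hL | split].
have [y [D' [_ hD' hP]]] := large_partition (proj1 hT) (large_cond hZ hT) hcov.
have [X _ [hy hym _ _]] := hP D' (cond_refl (proj1 hD')).
exists y, D'; split=> //.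
- exact: cond_trans hD' hT.
- by move=> i; apply: precedes_bound hym _; apply: tail_above hD _; exact: (proj2 hD' i).
- by apply: large_mono hP => x [].
Qed.

Section Regrouping.

Variables (y : nat -> natset) (Zs : nat -> natfam).
Hypothesis y_blocks : blockseq y.
Hypothesis Zs_step : forall n x, Zs n.+1 x -> Zs n x /\ Zs n (nsetU (y n) x).
Hypothesis Zs_tail : forall n, exists2 A, fu (fun i => y (n + i)) A & Zs n A.

Lemma Zs_prefix n x z : Zs n x -> prefix_unions y n z -> Zs 0 (nsetU z x).
Proof.
elim: n x z => [|n IH] x z hx.
  by case=> [->|/unions_last_block [k [? []]]]; first by rewrite nset0U.
have [hx0 hxy] := Zs_step hx.
case=> [->|/unions_last_block [k [z' [hk hz' ->]]]].
  by have := IH x nset0 hx0 (or_introl erefl); rewrite !nset0U.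
move: hk; rewrite ltnS leq_eqVlt => /orP [/eqP ek|hk].
  by subst k; rewrite -nsetUA; exact: IH hxy hz'.
exact: IH hx0 (or_intror (prefix_unions_extend hz' hk)).
Qed.

Lemma regroup : exists e, [/\ blockseq e, forall k, fu y (e k) & forall A, fu e A -> Zs 0 A].
Proof.
have [e [s he]] : exists (e : nat -> natset) (s : nat -> nat), forall k,
    unions y (fun i => s k <= i < s k.+1) (e k) /\ Zs (s k) (e k).
  apply: (@staged_choice (fun n A b => unions y (fun i => n <= i < b) A /\ Zs n A)) => n.
  by have [A /unions_shift [b hA] hZA] := Zs_tail n; exists A, b.
have [hne hbd hord] := y_blocks.
have s_mono : forall i j, i <= j -> s i <= s j.
  apply: homo_step => k; have [u hu] := unions_nonempty hne (he k).1.
  by have [i /andP [h1 h2] _] := unions_mem (he k).1 hu; exact: leq_trans h1 (ltnW h2).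
exists e; split=> [|k|A].
- split=> [k|k|i j hij]; first exact: unions_nonempty hne (he k).1.
    exact: unions_below hbd (he k).1.
  apply: precedes_unions (he i).1 (he j).1 => p q /andP [_ hp] /andP [hq _].
  by apply: hord; exact: leq_trans hp (leq_trans (s_mono _ _ hij) hq).
- exact: unions_sub (he k).1.
- move=> /unions_last_block [k [z [_ hz ->]]]; apply: Zs_prefix (he k).2 _.
  case: hz => [->|hz]; [by left | right].
  apply: unions_trans hz => i hi; apply: unions_sub (he i).1 => p /andP [_ hp].
  exact: leq_trans hp (s_mono _ _ hi).
Qed.

End Regrouping.

Theorem hindman_large X D : blockseq D -> large X D ->
  exists e, cond e D /\ forall A, fu e A -> X A.
Proof.
move=> hD hX.
have step p : blockseq p.2 /\ large p.1 p.2 -> exists w : natset * (nat -> natset),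
    [/\ fu p.2 w.1, cond w.2 p.2, forall i, precedes w.1 (w.2 i)
      & large (fun x => p.1 x /\ p.1 (nsetU w.1 x)) w.2].
  by case=> hb hl; have [y [D' h]] := large_step hb hl; exists (y, D').
have [W hW] := guarded_choice (nset0, D) step.
(* Stage n is a pair (Zs n, Ds n), with Zs n large for Ds n; y n is the set
   chosen at stage n. *)
pose st n := iter n (fun p => (fun x => p.1 x /\ p.1 (nsetU (W p).1 x), (W p).2)) (X, D).
pose y n := (W (st n)).1.
have inv n : blockseq (st n).2 /\ large (st n).1 (st n).2.
  elim: n => [|n [hb hl]]; first by [].
  by have [_ [hb' _] _ hl'] := hW _ (conj hb hl).
have hy n := hW _ (inv n).
have chain : forall n k, n <= k -> cond (st k).2 (st n).2.
  by apply: cond_chain => n; [exact: (inv n).1 | case: (hy n)].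
have y_fu n j : n <= j -> fu (st n).2 (y j).
  by move=> hnj; apply: cond_fu (chain _ _ hnj) _; case: (hy j).
have y_blocks : blockseq y.
  have [[hne hbd _] _] := inv 0.
  split=> [j|j|i j hij].
  - exact: unions_nonempty hne (y_fu 0 j (leq0n j)).
  - exact: unions_below hbd (y_fu 0 j (leq0n j)).
  - have [_ _ hprec _] := hy i.
    by apply: precedes_unions_r (y_fu i.+1 j hij) => k _; exact: hprec.
have y_tail n : exists2 A, fu (fun i => y (n + i)) A & (st n).1 A.
  apply: (inv n).2; split=> [|i]; first exact: blockseq_shift.
  exact: y_fu (leq_addr i n).
have Zs_step n x : (st n.+1).1 x -> (st n).1 x /\ (st n).1 (nsetU (y n) x) by [].
have [e [he heY heX]] := regroup y_blocks Zs_step y_tail.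
exists e; split=> //; split=> // k.
by apply: unions_trans (heY k) => j _; exact: y_fu (leq0n j).
Qed.

Theorem hindman_coloring (b : nat -> natset) (colors : list nat) (c : natset -> nat) :
  blockseq b -> (forall A, fu b A -> List.In (c A) colors) ->
  exists e k, cond e b /\ forall A, fu e A -> c A = k.
Proof.
move=> hb hc.
have hcov X : fu b X -> True -> exists2 k, List.In k colors & c X = k.
  by move=> hX _; exists (c X); first exact: hc.
have [k [D' [_ hD' hl]]] := large_partition (P := fun k X => c X = k) hb (@large_true b) hcov.
have [e [he heX]] := hindman_large (proj1 hD') hl.
by exists e, k; split; first exact: cond_trans he hD'.
Qed.

(* Every IP set contains a block sequence.  Since the pairwise disjoint
   members of an IP set are distinct, arbitrarily many of them are nonempty
   and avoid any given initial segment. *)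
Lemma ip_blocks S : IPset S -> exists b, blockseq b /\ forall i, S (b i).
Proof.
move=> [hfin [_ [D [hDS [hdiff hdisj]]]]].
have above_next X m : above X m -> ~~ X m -> above X m.+1.
  move=> hX hm u hu; rewrite ltn_neqAle hX // andbT.
  by apply: (contraNneq _ hm) => ->.
have late m : forall N, exists i, [/\ N <= i, nonempty (D i) & above (D i) m].
  elim: m => [|m IH] N.
    have [u hu] := hdiff N N.+1 (@n_Sn N).
    case hN: (D N u); first by exists N; split=> //; exists u.
    exists N.+1; split=> //; exists u; move: hu; rewrite hN.
    by case: (D N.+1 u).
  have [i [hNi hne hab]] := IH N.
  case him: (D i m); last by exists i; split=> //; apply: above_next; rewrite ?him.
  have [j [hij hne' hab']] := IH i.+1.
  exists j; split=> //; first exact: leq_trans hNi (ltnW hij).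
  apply: above_next => //; apply/negP => hjm.
  have hji : i <> j by move=> eij; rewrite eij ltnn in hij.
  by have := hdisj i j hji m; rewrite him hjm.
have start m : exists x, [/\ S x, nonempty x, above x m & exists b, below x b].
  have [i [_ hne hab]] := late m 0.
  by exists (D i); split; [exact: hDS | | | exact: hfin _ (hDS i)].
have [b [s [hbS _ hb]]] := separated_sequence start.
by exists b.
Qed.

Lemma blocks_IPset e : blockseq e -> IPset (fu e).
Proof.
move=> he; have [hne hbd hord] := he.
have disj i j u : i <> j -> e i u -> e j u -> False.
  move=> hij hi hj; case: (ltngtP i j) => [h|h|h].
  - by have := hord _ _ h _ _ hi hj; rewrite ltnn.
  - by have := hord _ _ h _ _ hj hi; rewrite ltnn.
  - exact: hij.
split; first by move=> A /(unions_below hbd) [m hm]; exists m.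
split; first by move=> A B; exact: unionsU.
exists e; split; first exact: fu1.
split.
  move=> i j hij; have [u hu] := hne i; exists u; rewrite hu.
  by case hj: (e j u) => //; case: (disj i j u hij hu hj).
by move=> i j hij u; apply/negP => /andP [hi hj]; exact: disj hij hi hj.
Qed.

Lemma In_mem (T : eqType) (x : T) (s : seq T) : x \in s -> List.In x s.
Proof. by elim: s => [//|a s IH]; rewrite in_cons => /orP [/eqP ->|/IH]; [left | right]. Qed.

Theorem lemma2p4 (S : natfam) (r : nat) (c : natset -> nat) :
  IPset S -> 1 <= r -> (forall A, S A -> 1 <= c A <= r) ->
  (exists S' : natfam, IPset S' /\ (forall A, S' A -> S A) /\
     exists k, forall A, S' A -> c A = k)
  \/
  (exists (Bs : list natset) (T : natfam),
     (forall B, List.In B Bs -> S B) /\ IPset T /\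
     (forall A, T A -> fam_minus S Bs A) /\ full_matches c Bs T).
Proof.
move=> hS _ hc; left.
have [b [hb hbS]] := ip_blocks hS.
have fu_S A : fu b A -> S A.
  by elim=> [i _|? ? _ h1 _ h2]; [exact: hbS | exact: hS.2.1].
have hcol A : fu b A -> List.In (c A) (iota 1 r).
  by move=> /fu_S /hc hA; apply: In_mem; rewrite mem_iota add1n ltnS.
have [e [k [he hk]]] := hindman_coloring hb hcol.
exists (fu e); split; first exact: blocks_IPset he.1.
split; last by exists k.
by move=> A hA; apply: fu_S; exact: cond_fu he hA.
Qed.
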